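(* Let $A\in\mathbb{R}^{n\times d}$, $k\ge1$, and let $B\in\mathbb{R}^{n\times m}$ satisfy $$BB^T\preceq AA^T\preceq BB^T+\tfrac12\cdot\tfrac{\|A-A_k\|_F^2}{k}I_n .$$ For each column $a_i$ of $A$ define $\tilde\tau_i=a_i^T\Big(BB^T+\frac{\|A\|_F^2-\|B_k\|_F^2}{k}I_n\Big)^+a_i$. Then for all $i$, $$\tfrac12\bar\tau_i(A)\le\tilde\tau_i\le2\bar\tau_i(A).$$
   Context: For any matrix $N$, $N_k$ denotes a best rank-$k$ approximation in Frobenius norm, so $\|N_k\|_F^2$ is the sum of the $k$ largest squared singular values of $N$. $^+$ is the Moore–Penrose pseudoinverse and $\preceq$ the Loewner order. Ridge leverage score: $\bar\tau_i(A)=a_i^T\big(AA^T+\frac{\|A-A_k\|_F^2}{k}I_n\big)^+a_i$. *)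

(* real closed fields (elementarily equivalent to the reals). *)
From HB Require Import structures.
From mathcomp Require Import all_boot all_order all_algebra.
Set Implicit Arguments. Unset Strict Implicit. Unset Printing Implicit Defensive.
Import Order.TTheory GRing.Theory Num.Theory.
Local Open Scope ring_scope.

Definition fnorm2 (R : rcfType) (p q : nat) (M : 'M[R]_(p, q)) : R :=
  \sum_(i < p) \sum_(j < q) (M i j) ^+ 2.

Definition best_rank_approx (R : rcfType) (p q k : nat) (N Nk : 'M[R]_(p, q)) : Prop :=
  (\rank Nk <= k)%N /\
  forall X : 'M[R]_(p, q), (\rank X <= k)%N -> fnorm2 (N - Nk) <= fnorm2 (N - X).

Definition is_pinv (R : rcfType) (n : nat) (M X : 'M[R]_n) : Prop :=
  [/\ M *m X *m M = M, X *m M *m X = X, (M *m X)^T = M *m X & (X *m M)^T = X *m M].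

Definition loewner_le (R : rcfType) (n : nat) (M N : 'M[R]_n) : Prop :=
  forall x : 'cV[R]_n, 0 <= (x^T *m (N - M) *m x) 0 0.

Definition qform (R : rcfType) (n : nat) (X : 'M[R]_n) (a : 'cV[R]_n) : R :=
  (a^T *m X *m a) 0 0.

(* Put lam = |A - A_k|_F^2 / k and mu = (|A|_F^2 - |B_k|_F^2) / k.  A best rank-k
   approximation N_k of N equals Pi N for the orthogonal projection Pi onto the
   range of N_k, so |N_k|_F^2 = tr (Pi N N^T) while, by optimality,
   tr (Pi' N N^T) <= tr (Pi N N^T) for any projection Pi' of rank at most k.
   Playing the projections of A_k and B_k against each other with
   B B^T <= A A^T <= B B^T + (lam/2) I gives lam <= mu <= 3 lam / 2, hence
   B B^T + mu I <= 2 (A A^T + lam I) and A A^T + lam I <= 2 (B B^T + mu I).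
   For lam > 0 both matrices are positive definite, their pseudoinverses are
   inverses, and M <= c N implies N^-1 <= c M^-1 because
   a^T M^-1 a = max_x (2 a^T x - x^T M x).  For lam = 0 the two matrices
   coincide. *)

From mathcomp Require Import all_boot all_order all_algebra.
From mathcomp Require Import ring lra.
Import Order.TTheory GRing.Theory Num.Theory.
Local Open Scope ring_scope.
Set Implicit Arguments. Unset Strict Implicit.

Section Frobenius.
Variable R : rcfType.

Lemma fnorm2_tr p q (M : 'M[R]_(p, q)) : fnorm2 M = \tr (M *m M^T).
Proof.
rewrite /fnorm2 /mxtrace; apply: eq_bigr => i _; rewrite mxE.
by apply: eq_bigr => j _; rewrite !mxE expr2.
Qed.

Lemma fnorm2_ge0 p q (M : 'M[R]_(p, q)) : 0 <= fnorm2 M.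
Proof. by apply: sumr_ge0 => i _; apply: sumr_ge0 => j _; apply: sqr_ge0. Qed.

Lemma fnorm2_eq0 p q (M : 'M[R]_(p, q)) : fnorm2 M = 0 -> M = 0.
Proof.
move/eqP; rewrite psumr_eq0 => [/allP M0|i _]; last first.
  by apply: sumr_ge0 => j _; apply: sqr_ge0.
apply/matrixP => i j; rewrite mxE.
have /= := M0 i (mem_index_enum _); rewrite psumr_eq0 => [/allP Mi0|l _].
  by have /= := Mi0 j (mem_index_enum _); rewrite sqrf_eq0 => /eqP.
exact: sqr_ge0.
Qed.

Lemma fnorm2_gt0 p q (M : 'M[R]_(p, q)) : M != 0 -> 0 < fnorm2 M.
Proof.
move=> M0; rewrite lt_def fnorm2_ge0 andbT.
by apply: contraNneq M0 => /fnorm2_eq0 ->.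
Qed.

Lemma fnorm2D_pythagoras n q (Pi : 'M[R]_n) (U V : 'M[R]_(n, q)) :
  Pi^T = Pi -> Pi *m U = 0 -> Pi *m V = V ->
  fnorm2 (U + V) = fnorm2 U + fnorm2 V.
Proof.
move=> PiT PiU PiV.
have crossUV : \tr (U *m V^T) = 0.
  by rewrite -PiV trmx_mul PiT mulmxA mxtrace_mulC mulmxA PiU !mul0mx mxtrace0.
have crossVU : \tr (V *m U^T) = 0.
  by rewrite -mxtrace_tr trmx_mul trmxK crossUV.
rewrite !fnorm2_tr linearD /= mulmxDl !mulmxDr !mxtraceD crossUV crossVU.
by rewrite addr0 add0r.
Qed.

End Frobenius.

Section OrthogonalProjection.
Variables (R : rcfType) (n : nat) (Pi : 'M[R]_n).
Hypotheses (PiT : Pi^T = Pi) (PiK : Pi *m Pi = Pi).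

Lemma fnorm2_projM q (M : 'M[R]_(n, q)) :
  fnorm2 (Pi *m M) = \tr (Pi *m (M *m M^T)).
Proof.
rewrite fnorm2_tr trmx_mul PiT mulmxA [LHS]mxtrace_mulC -mulmxA.
by rewrite (mulmxA Pi Pi M) PiK [LHS]mxtrace_mulC.
Qed.

Lemma fnorm2_sub_projM q (M Y : 'M[R]_(n, q)) : Pi *m Y = Y ->
  fnorm2 (M - Y) = fnorm2 (M - Pi *m M) + fnorm2 (Pi *m M - Y).
Proof.
move=> PiY; rewrite -(fnorm2D_pythagoras PiT) ?addrA ?subrK //.
  by rewrite mulmxBr mulmxA PiK subrr.
by rewrite mulmxBr mulmxA PiK PiY.
Qed.

Lemma fnorm2_residual_proj q (M : 'M[R]_(n, q)) :
  fnorm2 (M - Pi *m M) = fnorm2 M - \tr (Pi *m (M *m M^T)).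
Proof.
have := fnorm2_sub_projM M (mulmx0 _ Pi); rewrite !subr0 => ->.
by rewrite fnorm2_projM addrK.
Qed.

Lemma best_rank_approx_eq_projM k q (M Mk : 'M[R]_(n, q)) :
  best_rank_approx k M Mk -> Pi *m Mk = Mk -> (\rank (Pi *m M) <= k)%N ->
  Mk = Pi *m M.
Proof.
move=> [_ Mk_opt] PiMk rkPiM.
have := Mk_opt _ rkPiM; rewrite (fnorm2_sub_projM M PiMk) -lerBrDl subrr => le0.
have /fnorm2_eq0/eqP : fnorm2 (Pi *m M - Mk) = 0.
  by apply/eqP; rewrite eq_le le0 fnorm2_ge0.
by rewrite subr_eq0 => /eqP.
Qed.

Lemma best_rank_residual_le_proj k q (M Mk : 'M[R]_(n, q)) :
  best_rank_approx k M Mk -> (\rank (Pi *m M) <= k)%N ->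
  fnorm2 (M - Mk) <= fnorm2 M - \tr (Pi *m (M *m M^T)).
Proof. by move=> [_ Mk_opt] /Mk_opt; rewrite fnorm2_residual_proj. Qed.

Lemma mxtrace_proj_le (M N : 'M[R]_n) :
  loewner_le M N -> \tr (Pi *m M) <= \tr (Pi *m N).
Proof.
move=> MN; rewrite -subr_ge0 -linearB -mulmxBr /= -{1}PiK -mulmxA mxtrace_mulC.
rewrite -{1}PiT /mxtrace; apply: sumr_ge0 => j _.
have -> : (Pi^T *m (N - M) *m Pi) j j = qform (N - M) (col j Pi).
  rewrite /qform tr_col -row_mul !mxE; apply: eq_bigr => l _.
  by rewrite !mxE.
exact: MN.
Qed.

End OrthogonalProjection.

Lemma proj_of_rank_le (R : rcfType) n q k (X : 'M[R]_(n, q)) :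
  (\rank X <= k)%N ->
  exists Pi : 'M[R]_n, [/\ Pi^T = Pi, Pi *m Pi = Pi, Pi *m X = X,
    \tr Pi <= k%:R & (\rank Pi <= k)%N].
Proof.
rewrite -mxrank_tr => rkX.
have XW : (X^T <= row_base X^T)%MS by rewrite eq_row_base submx_refl.
move: (row_base X^T) (row_base_free X^T) XW rkX.
move: (\rank X^T) => r W Wfree /submxP[D XD] rk_r.
pose G := W *m W^T.
have GT : G^T = G by rewrite trmx_mul trmxK.
have Gu : G \in unitmx.
  rewrite -row_free_unit -kermx_eq0; apply/eqP.
  have KW : kermx G *m W = 0.
    apply: fnorm2_eq0; rewrite fnorm2_tr trmx_mul mulmxA -(mulmxA _ W) mulmx_ker.
    by rewrite mul0mx mxtrace0.
  by apply/eqP; rewrite -(mulmx_free_eq0 _ Wfree) KW.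
(* the orthogonal projection W^T (W W^T)^-1 W onto the column space of X *)
exists (W^T *m invmx G *m W); split.
- by rewrite !trmx_mul trmxK trmx_inv GT mulmxA.
- by rewrite -!mulmxA (mulmxA W) -/G (mulmxA G) mulmxV // mul1mx mulmxA.
- have -> : X = W^T *m D^T by rewrite -trmx_mul -XD trmxK.
  by rewrite -!mulmxA (mulmxA W) -/G (mulmxA _ G) mulVmx // mul1mx.
- by rewrite -mulmxA mxtrace_mulC -mulmxA -/G mulVmx // mxtrace1 ler_nat.
- by rewrite -mulmxA (leq_trans (mxrankM_maxl _ _)) // (leq_trans (rank_leq_col _)).
Qed.

Section QuadraticForm.
Variables (R : rcfType) (n : nat).
Implicit Types (M N X : 'M[R]_n) (a x y : 'cV[R]_n).

Lemma qform_tr X a : qform X a = \tr (a^T *m X *m a).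
Proof. by rewrite trace_mx11. Qed.

Lemma mxtrace_dot_sym x y : \tr (x^T *m y) = \tr (y^T *m x).
Proof. by rewrite -mxtrace_tr trmx_mul trmxK. Qed.

Lemma qformD M N x : qform (M + N) x = qform M x + qform N x.
Proof. by rewrite !qform_tr mulmxDr mulmxDl mxtraceD. Qed.

Lemma qformB M N x : qform (M - N) x = qform M x - qform N x.
Proof. by rewrite !qform_tr mulmxBr mulmxBl linearB. Qed.

Lemma qformZ M c x : qform M (c *: x) = c ^+ 2 * qform M x.
Proof.
rewrite !qform_tr -scalemxAr mxtraceZ linearZ /= -!scalemxAl mxtraceZ.
by rewrite mulrA expr2.
Qed.

Lemma qform_scalar c x : qform c%:M x = c * fnorm2 x.
Proof.
by rewrite qform_tr mul_mx_scalar -scalemxAl mxtraceZ fnorm2_tr mxtrace_mulC.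
Qed.

Lemma qform_gram p (A : 'M[R]_(n, p)) x : qform (A *m A^T) x = fnorm2 (A^T *m x).
Proof.
by rewrite qform_tr fnorm2_tr [RHS]mxtrace_mulC trmx_mul trmxK !mulmxA.
Qed.

Lemma qform_gram_ge0 p (A : 'M[R]_(n, p)) x : 0 <= qform (A *m A^T) x.
Proof. by rewrite qform_gram fnorm2_ge0. Qed.

Lemma loewner_leP M N : loewner_le M N <-> forall x, qform M x <= qform N x.
Proof.
split=> MN x; first by rewrite -subr_ge0 -qformB; apply: MN.
by rewrite -/(qform (N - M) x) qformB subr_ge0.
Qed.

Lemma qform_sym_eq0 M : M^T = M -> (forall x, qform M x = 0) -> M = 0.
Proof.
move=> MT M0; apply/matrixP => i j; rewrite mxE.
pose e l : 'cV[R]_n := delta_mx l 0.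
have qform_delta l l' : ((e l)^T *m M *m e l') 0 0 = M l l'.
  by rewrite trmx_delta -rowE -colE !mxE.
have := M0 (e i + e j).
rewrite qform_tr !linearD /= !mulmxDl !mxtraceD !trace_mx11 !qform_delta.
have := M0 (e i); rewrite /qform qform_delta => ->.
have := M0 (e j); rewrite /qform qform_delta => ->.
have -> : M j i = M i j by rewrite -{1}MT mxE.
by move=> Mij; lra.
Qed.

End QuadraticForm.

Section PseudoInverse.
Variables (R : rcfType) (n : nat).
Implicit Types (M X : 'M[R]_n).

Lemma pinv_unique M X1 X2 : is_pinv M X1 -> is_pinv M X2 -> X1 = X2.
Proof.
move=> [MXM1 XMX1 MXT1 XMT1] [MXM2 XMX2 MXT2 XMT2].
have MT2 : M^T = M^T *m M *m X2 by rewrite -{1}MXM2 trmx_mul MXT2 mulmxA.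
have MT1 : M^T = X1 *m M *m M^T by rewrite -{1}MXM1 -mulmxA trmx_mul XMT1.
have X1E : X1 = X1 *m M *m X2.
  have {1}-> : X1 = X1 *m X1^T *m M^T.
    by rewrite -mulmxA -trmx_mul MXT1 mulmxA XMX1.
  by rewrite MT2 !mulmxA -(mulmxA X1 X1^T) -trmx_mul MXT1 !mulmxA XMX1.
have X2E : X2 = X1 *m M *m X2.
  have {1}-> : X2 = M^T *m X2^T *m X2 by rewrite -trmx_mul XMT2 XMX2.
  rewrite MT1 -!mulmxA (mulmxA M^T) -trmx_mul XMT2 !mulmxA.
  by rewrite -(mulmxA _ X2 M) -(mulmxA _ (X2 *m M)) XMX2 ?mulmxA.
by rewrite X1E -X2E.
Qed.

Lemma trmx_pinv M X : M^T = M -> is_pinv M X -> X^T = X.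
Proof.
move=> MT pinvX; apply: (pinv_unique _ pinvX); case: pinvX => [MXM XMX MXT XMT].
split.
- by apply: trmx_inj; rewrite !trmx_mul trmxK MT mulmxA MXM.
- by apply: trmx_inj; rewrite !trmx_mul trmxK MT mulmxA XMX.
- by rewrite trmx_mul trmxK MT -{2}MT -trmx_mul XMT.
- by rewrite trmx_mul trmxK MT -{2}MT -trmx_mul MXT.
Qed.

Lemma pinv_qform_ge0 M X a :
  M^T = M -> (forall x, 0 <= qform M x) -> is_pinv M X -> 0 <= qform X a.
Proof.
move=> MT M_ge0 pinvX; have XT := trmx_pinv MT pinvX; case: pinvX => [_ XMX _ _].
have -> : qform X a = qform M (X *m a).
  by rewrite /qform trmx_mul XT -{1}XMX !mulmxA.
exact: M_ge0.
Qed.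

End PseudoInverse.

Definition pos_def (R : rcfType) n (M : 'M[R]_n) := forall x, x != 0 -> 0 < qform M x.

Section PositiveDefinite.
Variables (R : rcfType) (n : nat).
Implicit Types (M X : 'M[R]_n).

Lemma pos_def_ridge M c :
  (forall x, 0 <= qform M x) -> 0 < c -> pos_def (M + c%:M).
Proof.
move=> M_ge0 c_gt0 x x0; rewrite qformD qform_scalar.
by rewrite ltr_wpDl // mulr_gt0 // fnorm2_gt0.
Qed.

Lemma pos_def_pinv_mulmx M X : pos_def M -> M *m X *m M = M -> M *m X = 1%:M.
Proof.
move=> Mpd MXM; apply/eqP; rewrite -subr_eq0; apply/eqP/row_matrixP => i.
set r := row i (M *m X - 1%:M); rewrite row0.
have rM0 : r *m M = 0 by rewrite -row_mul mulmxBl MXM mul1mx subrr row0.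
apply/eqP/contraT; rewrite -trmx_eq0 => /Mpd.
by rewrite /qform trmxK rM0 mul0mx mxE ltxx.
Qed.

Section Inverse.
Variables (M X : 'M[R]_n).
Hypotheses (MT : M^T = M) (MX : M *m X = 1%:M).

Lemma qform_inv_conj a : qform M (X *m a) = qform X a.
Proof.
have aX : (X *m a)^T *m M = a^T by rewrite -MT -trmx_mul mulmxA MX mul1mx.
by rewrite /qform aX mulmxA.
Qed.

Lemma qform_inv_ge a x : (forall y, 0 <= qform M y) ->
  2%:R * \tr (a^T *m x) - qform M x <= qform X a.
Proof.
move=> M_ge0; set y := X *m a.
have My : M *m y = a by rewrite mulmxA MX mul1mx.
have xMy : \tr (x^T *m M *m y) = \tr (a^T *m x) by rewrite -mulmxA My mxtrace_dot_sym.
have yMx : \tr (y^T *m M *m x) = \tr (a^T *m x) by rewrite -MT -trmx_mul My.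
have := M_ge0 (x - y); rewrite qform_tr !linearB /= !mulmxBl !linearB /=.
by rewrite xMy yMx -!qform_tr qform_inv_conj => ?; lra.
Qed.

End Inverse.

Lemma qform_inv_le_scale M1 M2 X1 X2 c a :
  M1^T = M1 -> M2^T = M2 -> (forall x, 0 <= qform M1 x) ->
  M1 *m X1 = 1%:M -> M2 *m X2 = 1%:M -> 0 < c ->
  (forall x, qform M1 x <= c * qform M2 x) ->
  qform X2 a <= c * qform X1 a.
Proof.
move=> M1T M2T M1_ge0 M1X1 M2X2 c_gt0 M12.
set y := X2 *m a.
have ay : \tr (a^T *m y) = qform X2 a by rewrite qform_tr mulmxA.
(* the variational bound for X1, evaluated at y / c *)
have := qform_inv_ge M1T M1X1 a (c^-1 *: y) M1_ge0.
rewrite -scalemxAr mxtraceZ ay qformZ => lowX1.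
have := M12 y; rewrite (qform_inv_conj M2T M2X2) => M1y.
have c0 : c != 0 by rewrite gt_eqF.
have cV_gt0 : 0 < c^-1 by rewrite invr_gt0.
rewrite -(ler_pM2l cV_gt0) mulrA mulVf // mul1r.
apply: le_trans lowX1; rewrite -subr_ge0.
have -> : 2%:R * (c^-1 * qform X2 a) - c^-1 ^+ 2 * qform M1 y - c^-1 * qform X2 a
    = c^-1 ^+ 2 * (c * qform X2 a - qform M1 y) by field.
by rewrite mulr_ge0 ?subr_ge0 // exprn_ge0 // ltW.
Qed.

End PositiveDefinite.

Lemma best_rank_approx_proj (R : rcfType) n q k (M Mk : 'M[R]_(n, q)) :
  best_rank_approx k M Mk ->
  exists Pi : 'M[R]_n, [/\ Pi^T = Pi, Pi *m Pi = Pi, Mk = Pi *m M,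
    \tr Pi <= k%:R & forall p (N : 'M[R]_(n, p)), (\rank (Pi *m N) <= k)%N].
Proof.
move=> Mk_best; have [rkMk _] := Mk_best.
have [Pi [PiT PiK PiMk trPi rkPi]] := proj_of_rank_le rkMk.
have rkPiM p (N : 'M[R]_(n, p)) : (\rank (Pi *m N) <= k)%N.
  exact: leq_trans (mxrankM_maxl _ _) rkPi.
by exists Pi; split=> //; apply: best_rank_approx_eq_projM Mk_best PiMk _.
Qed.

Section BestRankResidual.
Variables (R : rcfType) (n p q k : nat).
Variables (A Ak : 'M[R]_(n, p)) (B Bk : 'M[R]_(n, q)).
Hypotheses (Ak_best : best_rank_approx k A Ak) (Bk_best : best_rank_approx k B Bk).

Lemma best_rank_residual_le :
  loewner_le (B *m B^T) (A *m A^T) -> fnorm2 (A - Ak) <= fnorm2 A - fnorm2 Bk.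
Proof.
move=> BA; have [PB [PBT PBK -> _ rkPB]] := best_rank_approx_proj Bk_best.
rewrite fnorm2_projM //.
apply: le_trans (best_rank_residual_le_proj PBT PBK Ak_best (rkPB _ A)) _.
by rewrite lerD2l lerN2 mxtrace_proj_le.
Qed.

Lemma fnorm2_sub_best_rank_le c : 0 <= c ->
  loewner_le (A *m A^T) (B *m B^T + c%:M) ->
  fnorm2 A - fnorm2 Bk <= fnorm2 (A - Ak) + k%:R * c.
Proof.
move=> c_ge0 AB; have [PA [PAT PAK AkE trPA rkPA]] := best_rank_approx_proj Ak_best.
have [PB [PBT PBK BkE _ _]] := best_rank_approx_proj Bk_best.
have PAB : \tr (PA *m (B *m B^T)) <= fnorm2 Bk.
  have := best_rank_residual_le_proj PAT PAK Bk_best (rkPA _ B).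
  by rewrite BkE fnorm2_residual_proj // fnorm2_projM // lerD2l lerN2.
have PAA : \tr (PA *m (A *m A^T)) <= \tr (PA *m (B *m B^T)) + k%:R * c.
  have := mxtrace_proj_le PAT PAK AB.
  rewrite mulmxDr mxtraceD mul_mx_scalar mxtraceZ => /le_trans; apply.
  by rewrite lerD2l mulrC ler_wpM2r.
rewrite AkE fnorm2_residual_proj //; lra.
Qed.

End BestRankResidual.

Section RidgeComparison.
Variables (R : rcfType) (n : nat) (G H P Q : 'M[R]_n) (lam mu : R).
Hypotheses (GT : G^T = G) (HT : H^T = H) (H_ge0 : forall x, 0 <= qform H x).
Hypotheses (HG : loewner_le H G) (GH : loewner_le G (H + (2%:R^-1 * lam)%:M)).
Hypotheses (lam_le_mu : lam <= mu) (mu_le : mu <= lam + 2%:R^-1 * lam).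
Hypotheses (P_pinv : is_pinv (G + lam%:M) P) (Q_pinv : is_pinv (H + mu%:M) Q).

Let qform_HG x : qform H x <= qform G x.
Proof. by move/loewner_leP: HG. Qed.

Let qform_GH x : qform G x <= qform H x + 2%:R^-1 * lam * fnorm2 x.
Proof. by have /loewner_leP/(_ x) := GH; rewrite qformD qform_scalar. Qed.

Let G_ge0 x : 0 <= qform G x.
Proof. exact: le_trans (H_ge0 x) (qform_HG x). Qed.

Let ridge_sym (M : 'M[R]_n) c : M^T = M -> (M + c%:M)^T = M + c%:M.
Proof. by move=> MT; rewrite linearD /= MT tr_scalar_mx. Qed.

Let ridge_ge0 (M : 'M[R]_n) c : (forall x, 0 <= qform M x) -> 0 <= c ->
  forall x, 0 <= qform (M + c%:M) x.
Proof.
by move=> M_ge0 c_ge0 x; rewrite qformD qform_scalar addr_ge0 ?mulr_ge0 ?fnorm2_ge0.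
Qed.

Lemma ridge_pinv_eq : lam = 0 -> P = Q.
Proof.
move=> lam0; have mu0 : mu = 0.
  by move: lam_le_mu mu_le; rewrite lam0 mulr0 addr0 => ? ?; apply/le_anti/andP.
have GHeq : G = H.
  apply/eqP; rewrite -subr_eq0; apply/eqP/qform_sym_eq0 => [|x].
    by rewrite linearB /= GT HT.
  by rewrite qformB; have := qform_HG x; have := qform_GH x; rewrite lam0; lra.
move: P_pinv Q_pinv; rewrite lam0 mu0 GHeq !raddf0 !addr0.
exact: pinv_unique.
Qed.

Lemma ridge_pinv_qform_bounds a :
  2%:R^-1 * qform P a <= qform Q a /\ qform Q a <= 2%:R * qform P a.
Proof.
have lam_ge0 : 0 <= lam by have := lam_le_mu; have := mu_le; lra.
have := lam_ge0; rewrite le_eqVlt eq_sym => /orP[/eqP lam0 | lam_gt0].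
  have := pinv_qform_ge0 a (ridge_sym lam GT) (ridge_ge0 G_ge0 lam_ge0) P_pinv.
  by rewrite -(ridge_pinv_eq lam0); split; lra.
have mu_gt0 : 0 < mu by have := lam_le_mu; lra.
have [GP _ _ _] := P_pinv; have [HQ _ _ _] := Q_pinv.
have {}GP := pos_def_pinv_mulmx (pos_def_ridge G_ge0 lam_gt0) GP.
have {}HQ := pos_def_pinv_mulmx (pos_def_ridge H_ge0 mu_gt0) HQ.
have two_gt0 : 0 < 2%:R :> R by [].
have lam_mu (x : 'cV[R]_n) : lam * fnorm2 x <= mu * fnorm2 x.
  by rewrite ler_wpM2r ?fnorm2_ge0.
have mu_lam (x : 'cV[R]_n) : mu * fnorm2 x <= (lam + 2%:R^-1 * lam) * fnorm2 x.
  by rewrite ler_wpM2r ?fnorm2_ge0.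
have lam_x_ge0 (x : 'cV[R]_n) : 0 <= lam * fnorm2 x by rewrite mulr_ge0 ?fnorm2_ge0.
split.
- suff : qform P a <= 2%:R * qform Q a by lra.
  apply: (qform_inv_le_scale a (ridge_sym mu HT) (ridge_sym lam GT)
    (ridge_ge0 H_ge0 (ltW mu_gt0)) HQ GP two_gt0) => x.
  rewrite !qformD !qform_scalar.
  have := qform_HG x; have := G_ge0 x; have := mu_lam x; have := lam_x_ge0 x; lra.
- apply: (qform_inv_le_scale a (ridge_sym lam GT) (ridge_sym mu HT)
    (ridge_ge0 G_ge0 (ltW lam_gt0)) GP HQ two_gt0) => x.
  rewrite !qformD !qform_scalar.
  have := qform_GH x; have := H_ge0 x; have := lam_mu x; have := lam_x_ge0 x; lra.
Qed.

End RidgeComparison.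

Unset Implicit Arguments.

Theorem mainTheorem11 (R : rcfType) (n d m k : nat)
  (A : 'M[R]_(n, d)) (B : 'M[R]_(n, m))
  (Ak : 'M[R]_(n, d)) (Bk : 'M[R]_(n, m))
  (P Q : 'M[R]_n) :
  (1 <= k)%N ->
  best_rank_approx k A Ak ->
  best_rank_approx k B Bk ->
  loewner_le (B *m B^T) (A *m A^T) ->
  loewner_le (A *m A^T)
    (B *m B^T + ((2%:R)^-1 * (fnorm2 (A - Ak) / k%:R))%:M) ->
  is_pinv (A *m A^T + (fnorm2 (A - Ak) / k%:R)%:M) P ->
  is_pinv (B *m B^T + ((fnorm2 A - fnorm2 Bk) / k%:R)%:M) Q ->
  forall i : 'I_d,
    (2%:R)^-1 * qform P (col i A) <= qform Q (col i A) /\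
    qform Q (col i A) <= 2%:R * qform P (col i A).
Proof.
move=> k_ge1 Ak_best Bk_best BA AB P_pinv Q_pinv i.
have k_gt0 : 0 < k%:R :> R by rewrite ltr0n.
have gram_sym p (M : 'M[R]_(n, p)) : (M *m M^T)^T = M *m M^T by rewrite trmx_mul trmxK.
set lam := fnorm2 (A - Ak) / k%:R in AB P_pinv *.
have lamk : lam * k%:R = fnorm2 (A - Ak) by rewrite divfK ?gt_eqF.
have c_ge0 : 0 <= 2%:R^-1 * lam by rewrite !mulr_ge0 ?invr_ge0 ?fnorm2_ge0 ?ler0n.
have residual_le := best_rank_residual_le Ak_best Bk_best BA.
have residual_ge := fnorm2_sub_best_rank_le Ak_best Bk_best c_ge0 AB.
apply: (ridge_pinv_qform_bounds (gram_sym _ A) (gram_sym _ B) (@qform_gram_ge0 _ _ _ B)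
  BA AB _ _ P_pinv Q_pinv).
- by rewrite -(ler_pM2r k_gt0) lamk divfK ?gt_eqF.
- by rewrite -(ler_pM2r k_gt0) divfK ?gt_eqF //; lra.
Qed.
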